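(* Fix $n\ge 1$, the shape $\lambda=n^2=(n,n)$, and a density $\rho$ with positive entries $\rho_{1,j}=a_j$, $\rho_{2,j}=b_j$ for $1\le j\le n$; let $a=\sum_j a_j$, $b=\sum_j b_j$. Let $P_{\max}=E^{a_1}N^{b_1}E^{a_2}N^{b_2}\cdots E^{a_n}N^{b_n}\in\mathcal{P}$ and $I=\{P\in\mathcal{P}: P\le P_{\max}\}$. Then $\psi_\rho$ is injective with image exactly $I$; in particular $\psi_\rho$ is a bijection between $\mathrm{SVT}(\lambda,\rho)$ and $I$.
   Context: A density on a shape $\lambda$ is an assignment of a nonnegative integer $\rho_{i,j}$ to every cell $(i,j)$ (row $i$, column $j$); let $N=\sum\rho_{i,j}$. A standard set-valued Young tableau of shape $\lambda$ and density $\rho$ assigns to each cell $(i,j)$ a set $S_{i,j}$ with $|S_{i,j}|=\rho_{i,j}$, the sets partitioning $[N]$, such that every element of $S_{i,j}$ is smaller than every element of $S_{i,j+1}$ and of $S_{i+1,j}$ whenever those cells exist. $\mathrm{SVT}(\lambda,\rho)$ is the set of these tableaux. $\mathcal{P}$ is the set of lattice paths from $(0,0)$ to $(a,b)$ using steps $E=(1,0)$ and $N=(0,1)$, written as words in $E,N$. The map $\psi_\rho:\mathrm{SVT}(\lambda,\rho)\to\mathcal{P}$ sends $T$ to the word whose $m$-th letter ($1\le m\le a+b$) is $E$ if $m$ lies in the first row of $T$ and $N$ if $m$ lies in the second row. For $P_1,P_2\in\mathcal{P}$, $P_1\ge P_2$ (equivalently $P_2\le P_1$) means $P_1$ lies weakly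 above $P_2$ over $0\le x\le a$. *)

From mathcomp Require Import all_boot.
Set Implicit Arguments. Unset Strict Implicit. Unset Printing Implicit Defensive.

Section SVT.
Variables (n : nat) (a b : 'I_n -> nat).

Definition suma : nat := \sum_(j < n) a j.
Definition sumb : nat := \sum_(j < n) b j.
Definition totN : nat := suma + sumb.

(* Cells are pairs (i, j) with i : 'I_2 (row 0 = first row, row 1 = second
   row) and j : 'I_n (column). The density: rho_{1,j} = a_j, rho_{2,j} = b_j. *)
Definition dens (c : 'I_2 * 'I_n) : nat :=
  if c.1 == ord0 then a c.2 else b c.2.

(* The ground set [N] = {1,...,N} is represented by 'I_N = {0,...,N-1},
   element m : 'I_N standing for m+1 (order preserving). *)
Definition tableau := {ffun 'I_2 * 'I_n -> {set 'I_totN}}.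

Definition is_SVT (T : tableau) : Prop :=
  [/\ (forall c, #|T c| = dens c),
      (forall m : 'I_totN, exists c, m \in T c),
      (forall c c', c <> c' -> [disjoint T c & T c']),
      (forall (i : 'I_2) (j j' : 'I_n), val j' = (val j).+1 ->
         forall x y, x \in T (i, j) -> y \in T (i, j') -> x < y)
    &
      (forall (j : 'I_n) x y, x \in T (ord0, j) -> y \in T (ord_max, j) -> x < y)].

(* Lattice paths as words: true = E = (1,0), false = N = (0,1). *)
Definition psi (T : tableau) : seq bool :=
  [seq [exists j, m \in T (ord0, j)] | m <- enum 'I_totN].

Definition Pmax : seq bool :=
  flatten [seq nseq (a j) true ++ nseq (b j) false | j <- enum 'I_n].

End SVT.

Definition lattice_path (x y : nat) (P : seq bool) : Prop :=
  size P = x + y /\ count id P = x.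

Definition path_pt (P : seq bool) (k : nat) : nat * nat :=
  (count id (take k P), count negb (take k P)).

Definition on_path (P : seq bool) (p : nat * nat) : Prop :=
  exists2 k, k <= size P & path_pt P k = p.

(* lpath_le P2 P1 : P1 lies weakly above P2, i.e. for every abscissa x, every
   point of P2 on the vertical line x lies weakly below some point of P1 on
   that line. *)
Definition lpath_le (P2 P1 : seq bool) : Prop :=
  forall x y2, on_path P2 (x, y2) -> exists2 y1, on_path P1 (x, y1) & y2 <= y1.

From Pilot Require Import Defs.
From mathcomp Require Import all_boot.
Set Implicit Arguments. Unset Strict Implicit. Unset Printing Implicit Defensive.

(* Read the word psi T row by row: an entry m of row i sits in cell (i, j) exactly when
   the number of row-i letters before position m lies in [rho_{i,1} + ... + rho_{i,j-1},
   rho_{i,1} + ... + rho_{i,j}), because the rows increase and every cell is nonempty.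
   So T is recovered from psi T, and the same recipe turns any word into a filling with
   the right shape, densities and increasing rows.  Column strictness then says precisely
   that a prefix with fewer than a_1 + ... + a_{j+1} letters E has at most b_1 + ... + b_j
   letters N, i.e. that the path stays weakly below the staircase P_max. *)

Lemma sumn_take_sum N (s : seq nat) k : size s = N ->
  sumn (take k s) = \sum_(i < N | i < k) nth 0 s i.
Proof.
move=> <-; elim: s k => [|x s IH] [|k] /=; rewrite ?big_ord0 // big_mkcond big_ord_recl /=.
  by rewrite big1.
by rewrite IH big_mkcond.
Qed.

Section Counting.
Variable A : Type.
Implicit Types (p : pred A) (w : seq A).

Lemma count_take_sum (x0 : A) N p w k : size w = N ->
  count p (take k w) = \sum_(i < N | i < k) p (nth x0 w i).
Proof.
move=> sizew; rewrite -sumn_count map_take (sumn_take_sum _ (size_map _ _)) sizew.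
by apply: eq_bigr => i _; rewrite (nth_map x0) // sizew.
Qed.

Lemma count_take_leq p w k : count p (take k w) <= count p w.
Proof. by rewrite -{2}(cat_take_drop k w) count_cat leq_addr. Qed.

Lemma count_takeS (x0 : A) p w k : k < size w ->
  count p (take k.+1 w) = count p (take k w) + p (nth x0 w k).
Proof. by move=> lt_k; rewrite (take_nth x0 lt_k) -cats1 count_cat /= addn0. Qed.

Lemma count_take_cat p u v k :
  count p (take k (u ++ v)) = count p (take k u) + count p (take (k - size u) v).
Proof.
rewrite take_cat; case: ltnP => [lt_ku | le_uk].
  have /eqP -> : k - size u == 0 by rewrite subn_eq0 ltnW.
  by rewrite take0 addn0.
by rewrite count_cat (take_oversize le_uk).
Qed.

Lemma count_take_nseq p k m (x : A) : count p (take k (nseq m x)) = p x * minn k m.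
Proof.
case: (leqP k m) => [le_km | /ltnW le_mk].
  by rewrite take_nseq // count_nseq.
by rewrite take_oversize ?size_nseq // count_nseq.
Qed.

End Counting.

Definition rank (w : seq bool) (e : bool) k := count (pred1 e) (take k w).

Lemma rank_mono w e : {homo rank w e : k k' / k <= k'}.
Proof. by move=> k k' le_kk'; rewrite /rank -(take_takel w le_kk') count_take_leq. Qed.

Lemma rankS w e k : k < size w -> rank w e k.+1 = rank w e k + (nth false w k == e).
Proof. exact: count_takeS. Qed.

Lemma rank_true w k : rank w true k = count id (take k w).
Proof. by apply: eq_count => x; rewrite /= eqb_id. Qed.

Lemma rank_false w k : rank w false k = count negb (take k w).
Proof. by apply: eq_count => x; rewrite /= eqbF_neg. Qed.

Lemma sum_rank_lt (w : seq bool) e t k : k <= size w ->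
  \sum_(m < k) ((nth false w m == e) && (rank w e m < t)) = minn t (rank w e k).
Proof.
elim: k => [|k IH] lt_kw; first by rewrite big_ord0 /rank take0 minn0.
rewrite big_ord_recr [X in X = _]/= IH; last exact: ltnW.
rewrite [rank w e k.+1]rankS //; case: (nth false w k == e); last by rewrite !addn0.
case: ltnP => [lt_rt | le_tr]; rewrite ?addn0 ?addn1.
  by apply/esym/minn_idPr.
by apply/esym/minn_idPl; rewrite leqW.
Qed.

Section Blocks.
Variable f : nat -> nat.

Lemma block_exists r t : f 0 = 0 -> r < f t -> exists2 j, j < t & f j <= r < f j.+1.
Proof.
move=> f0; elim: t => [|t IH]; first by rewrite f0.
case: (ltnP r (f t)) => [/IH [j lt_jt r_j] _ | le_r lt_r]; last by exists t; rewrite ?le_r.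
by exists j; first exact: ltnW.
Qed.

Lemma block_unique r j j' : {homo f : x y / x <= y} ->
  f j <= r < f j.+1 -> f j' <= r < f j'.+1 -> j = j'.
Proof.
move=> f_mono /andP [le_jr lt_rj] /andP [le_j'r lt_rj'].
case: (ltngtP j j') => // [lt_jj' | lt_j'j].
  by move: (leq_trans (f_mono _ _ lt_jj') le_j'r); rewrite leqNgt lt_rj.
by move: (leq_trans (f_mono _ _ lt_j'j) le_jr); rewrite leqNgt lt_rj'.
Qed.

End Blocks.

Lemma sumn_take_enum n (F : 'I_n -> nat) t :
  sumn (take t [seq F j | j <- enum 'I_n]) = \sum_(j < n | j < t) F j.
Proof.
rewrite (@sumn_take_sum n); last by rewrite size_map size_enum_ord.
by apply: eq_bigr => j _; rewrite (nth_map j) ?size_enum_ord // nth_ord_enum.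
Qed.

Lemma sumn_enum n (F : 'I_n -> nat) : sumn [seq F j | j <- enum 'I_n] = \sum_(j < n) F j.
Proof. by rewrite sumnE big_map big_enum. Qed.

Definition staircase (l : seq (nat * nat)) : seq bool :=
  flatten [seq nseq p.1 true ++ nseq p.2 false | p <- l].

Lemma staircase_cons p q l :
  staircase ((p, q) :: l) = nseq p true ++ nseq q false ++ staircase l.
Proof. by rewrite /staircase /= -catA. Qed.

Lemma path_pt_staircase_cons p q l k :
  path_pt (staircase ((p, q) :: l)) k =
  (minn k p + count id (take (k - p - q) (staircase l)),
   minn (k - p) q + count negb (take (k - p - q) (staircase l))).
Proof.
rewrite /path_pt staircase_cons !count_take_cat !count_take_nseq !size_nseq /=.
by rewrite !mul1n !mul0n !add0n.
Qed.

Lemma staircase_below l k t :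
  (path_pt (staircase l) k).1 < sumn (take t.+1 (map fst l)) ->
  (path_pt (staircase l) k).2 <= sumn (take t (map snd l)).
Proof.
elim: l k t => [|[p q] l IH] k t; first by rewrite /path_pt /=.
rewrite path_pt_staircase_cons /=; case: t => [|t] /=.
  rewrite take0 /= addn0; case: (ltnP k p) => [lt_kp _ | le_pk].
    have /eqP -> : k - p == 0 by rewrite subn_eq0 ltnW.
    by rewrite sub0n take0 min0n.
  by rewrite ltnNge leq_addr.
case: (leqP k (p + q)) => [le_kpq _ | lt_pqk].
  have /eqP -> : k - p - q == 0 by rewrite -subnDA subn_eq0.
  by rewrite take0 addn0 (leq_trans (geq_minr _ _) (leq_addr _ _)).
have le_pk : p <= k by apply: leq_trans (ltnW lt_pqk); apply: leq_addr.
have le_qkp : q <= k - p by rewrite leq_subRL // ltnW.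
rewrite (minn_idPr le_pk) (minn_idPr le_qkp) ltn_add2l leq_add2l.
exact: IH.
Qed.

Lemma staircase_point l t x :
  sumn (take t (map fst l)) <= x <= sumn (take t.+1 (map fst l)) ->
  on_path (staircase l) (x, sumn (take t (map snd l))).
Proof.
elim: l t x => [|[p q] l IH] t x /=.
  by rewrite leqn0 => /eqP ->; exists 0.
have size_cons k : k <= size (staircase l) -> p + q + k <= size (staircase ((p, q) :: l)).
  by rewrite staircase_cons !size_cat !size_nseq addnA leq_add2l.
case: t => [|t] /=.
  rewrite take0 /= addn0 => le_xp; exists x.
    apply: leq_trans (size_cons 0 (leq0n _)); rewrite addn0.
    exact: leq_trans le_xp (leq_addr _ _).
  have /eqP xp0 : x - p == 0 by rewrite subn_eq0.
  by rewrite path_pt_staircase_cons (minn_idPl le_xp) xp0 sub0n take0 min0n addn0.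
move=> /andP [le_ptx le_xpt].
have le_px : p <= x by apply: leq_trans le_ptx; apply: leq_addr.
have [|k le_k pt_k] := IH t (x - p); first by rewrite leq_subRL // le_ptx leq_subLR.
exists (p + q + k); first exact: size_cons.
rewrite path_pt_staircase_cons -addnA !addKn (minn_idPr _) ?leq_addr // (minn_idPr _) ?leq_addr //.
by move: pt_k; rewrite /path_pt => -[-> ->]; rewrite subnKC.
Qed.

Lemma staircase_end l : on_path (staircase l) (sumn (map fst l), sumn (map snd l)).
Proof.
have := @staircase_point l (size l) (sumn (map fst l)).
by rewrite !take_oversize ?size_map ?leqnSn // leqnn; apply.
Qed.

Lemma lattice_path_count_negb x y P : lattice_path x y P -> count negb P = y.
Proof.
case=> size_P count_P; apply/eqP; rewrite -(eqn_add2l x) -{1}count_P.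
by rewrite (count_predC id) size_P.
Qed.

Lemma card_sum_mem (T : finType) (A : {pred T}) : #|A| = \sum_x (x \in A : nat).
Proof. by rewrite -sum1_card big_mkcond; apply: eq_bigr => x _; case: (x \in A). Qed.

Section EntriesBelow.
Variable N : nat.
Implicit Types (A : {set 'I_N}) (k : nat).

Definition nbelow A k := \sum_(x < N | x < k) (x \in A : nat).

Lemma nbelow_le A k : nbelow A k <= #|A|.
Proof. by rewrite card_sum_mem (bigID (fun x : 'I_N => x < k)) leq_addr. Qed.

Lemma nbelow_full A k : {in A, forall x : 'I_N, x < k} -> nbelow A k = #|A|.
Proof.
move=> A_lt; rewrite card_sum_mem (bigID (fun x : 'I_N => x < k)) /=.
rewrite [X in _ = _ + X]big1 ?addn0 // => x /negbTE lt_x.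
by apply/eqP; rewrite eqb0; apply: contraFN lt_x => /A_lt.
Qed.

Lemma nbelow_eq0 A k : {in A, forall x : 'I_N, k <= x} -> nbelow A k = 0.
Proof.
move=> A_ge; apply: big1 => x lt_x; apply/eqP; rewrite eqb0.
by apply: contraTN lt_x => /A_ge; rewrite -leqNgt.
Qed.

Lemma nbelow_lt A (m : 'I_N) : m \in A -> nbelow A m < #|A|.
Proof.
move=> m_in; rewrite card_sum_mem (bigID (fun x : 'I_N => x < m)) /= -addn1 leq_add2l.
by rewrite (bigD1 m) ?ltnn //= m_in leq_addr.
Qed.

Lemma nbelow_gt0 A k : 0 < nbelow A k -> exists2 x, x \in A & x < k.
Proof.
rewrite lt0n sum_nat_eq0 => /forallPn [x]; rewrite negb_imply eqb0 negbK.
by case/andP=> lt_x x_in; exists x.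
Qed.

End EntriesBelow.

Section Tableaux.
Variables (n : nat) (a b : 'I_n -> nat).
Hypotheses (a_gt0 : forall j, 0 < a j) (b_gt0 : forall j, 0 < b j).
Local Notation N := (totN a b).
Local Notation dens := (dens a b).
Local Notation tab := (tableau a b).

Definition row_letter (i : 'I_2) : bool := i == ord0.

Variant row_spec : 'I_2 -> bool -> Type :=
  | FirstRow : row_spec ord0 true
  | SecondRow : row_spec ord_max false.

Lemma rowP i : row_spec i (row_letter i).
Proof.
case: i => -[|[|//]] lt_i.
  by rewrite (_ : Ordinal lt_i = ord0); [exact: FirstRow | apply: val_inj].
by rewrite (_ : Ordinal lt_i = ord_max); [exact: SecondRow | apply: val_inj].
Qed.

Lemma row_letter_inj : injective row_letter.
Proof. by move=> i i'; case: rowP; case: rowP. Qed.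

Lemma dens_gt0 c : 0 < dens c.
Proof. by rewrite /Defs.dens; case: ifP. Qed.

Definition rowsum (i : 'I_2) t := \sum_(j < n | j < t) dens (i, j).

Lemma rowsum0 i : rowsum i 0 = 0.
Proof. by rewrite /rowsum big_pred0. Qed.

Lemma rowsumS i (j : 'I_n) : rowsum i j.+1 = rowsum i j + dens (i, j).
Proof.
rewrite /rowsum (bigD1 j) ?ltnSn //= addnC; congr (_ + _); apply: eq_bigl => j'.
by rewrite ltnS ltn_neqAle andbC.
Qed.

Lemma rowsum_mono i : {homo rowsum i : t t' / t <= t'}.
Proof.
move=> t t' le_tt'; rewrite /rowsum big_mkcond [X in _ <= X]big_mkcond leq_sum // => j _.
by case: ifP => // lt_jt; rewrite (leq_trans lt_jt le_tt').
Qed.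

Lemma rowsum_first : rowsum ord0 n = suma a.
Proof. by apply: eq_bigl => j; rewrite ltn_ord. Qed.

Lemma rowsum_second : rowsum ord_max n = sumb b.
Proof. by apply: eq_bigl => j; rewrite ltn_ord. Qed.

Lemma size_psi (T : tab) : size (psi T) = N.
Proof. by rewrite size_map size_enum_ord. Qed.

Lemma nth_psi (T : tab) (m : 'I_N) : nth false (psi T) m = [exists j, m \in T (ord0, j)].
Proof. by rewrite (nth_map m) ?size_enum_ord // nth_ord_enum. Qed.

Definition dominated (P : seq bool) := forall k (j : 'I_n),
  rank P true k < rowsum ord0 j.+1 -> rank P false k <= rowsum ord_max j.

Definition tableau_of_word (P : seq bool) : tab :=
  [ffun c : 'I_2 * 'I_n => [set m : 'I_N | (nth false P m == row_letter c.1) &&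
     (rowsum c.1 c.2 <= rank P (row_letter c.1) m < rowsum c.1 c.2.+1)]].

Lemma mem_tableau_of_word P i j m : (m \in tableau_of_word P (i, j)) =
  (nth false P m == row_letter i) && (rowsum i j <= rank P (row_letter i) m < rowsum i j.+1).
Proof. by rewrite ffunE inE. Qed.

Section SVT.
Variable T : tab.
Hypothesis T_SVT : is_SVT T.

Lemma SVT_card c : #|T c| = dens c.
Proof. by case: T_SVT. Qed.

Lemma SVT_cell_uniq c c' m : m \in T c -> m \in T c' -> c = c'.
Proof.
case: T_SVT => _ _ T_disj _ _ m_c m_c'; apply/eqP/negPn/negP => /eqP ne_cc'.
by have := disjointFr (T_disj _ _ ne_cc') m_c; rewrite m_c'.
Qed.

Lemma SVT_cell_nonempty c : exists m, m \in T c.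
Proof. by apply/card_gt0P; rewrite SVT_card dens_gt0. Qed.

Lemma SVT_row_lt i (j j' : 'I_n) x y : j < j' -> x \in T (i, j) -> y \in T (i, j') -> x < y.
Proof.
case: T_SVT => _ _ _ T_row _; case: j' => k lt_kn /= lt_jk.
elim: k lt_kn lt_jk y => // k IH lt_kn; rewrite ltnS leq_eqVlt.
case/orP=> [/eqP eq_jk | lt_jk] y x_in y_in.
  by apply: T_row x_in y_in; rewrite /= eq_jk.
have lt_kn' : k < n by apply: ltnW.
have [z z_in] := SVT_cell_nonempty (i, Ordinal lt_kn').
apply: ltn_trans (IH lt_kn' lt_jk z x_in z_in) _.
exact: (T_row i (Ordinal lt_kn') (Ordinal lt_kn) erefl _ _ z_in y_in).
Qed.

Lemma SVT_col_lt (j j' : 'I_n) x y : j <= j' ->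
  x \in T (ord0, j) -> y \in T (ord_max, j') -> x < y.
Proof.
case: T_SVT => _ _ _ _ T_col; rewrite leq_eqVlt => /orP [/eqP/ord_inj <- | lt_jj'] x_in y_in.
  exact: T_col x_in y_in.
have [z z_in] := SVT_cell_nonempty (ord0, j').
exact: ltn_trans (SVT_row_lt lt_jj' x_in z_in) (T_col _ _ _ z_in y_in).
Qed.

Lemma nth_psi_cell i j (m : 'I_N) : m \in T (i, j) -> nth false (psi T) m = row_letter i.
Proof.
move=> m_in; rewrite nth_psi; case: rowP m_in => m_in; first by apply/existsP; exists j.
by apply/existsP => -[j' /(SVT_cell_uniq m_in)].
Qed.

Lemma psi_row_indicator i (m : 'I_N) :
  (nth false (psi T) m == row_letter i : nat) = \sum_(j < n) (m \in T (i, j) : nat).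
Proof.
case: T_SVT => _ T_cover _ _ _; have [[i0 j0] m_in] := T_cover m.
have memE c : (m \in T c) = (c == (i0, j0)).
  by apply/idP/eqP => [/SVT_cell_uniq/(_ m_in) | ->].
rewrite (nth_psi_cell m_in) (inj_eq row_letter_inj) eq_sym.
under eq_bigr => j _ do rewrite memE xpair_eqE.
case: (i == i0) => /=; last by rewrite big1.
by rewrite (bigD1 j0) //= eqxx big1 // => j /negbTE ->.
Qed.

Lemma rank_psi i k : rank (psi T) (row_letter i) k = \sum_(j < n) nbelow (T (i, j)) k.
Proof.
rewrite /rank (count_take_sum false _ _ (size_psi T)).
rewrite (eq_bigr _ (fun m _ => psi_row_indicator i m)); exact: exchange_big.
Qed.

Lemma rank_psi_cell i j (m : 'I_N) : m \in T (i, j) ->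
  rowsum i j <= rank (psi T) (row_letter i) m < rowsum i j.+1.
Proof.
move=> m_in; rewrite rank_psi rowsumS (bigID (fun j' : 'I_n => j' < j)) /=.
have -> : \sum_(j' < n | j' < j) nbelow (T (i, j')) m = rowsum i j.
  apply: eq_bigr => j' lt_j'j; rewrite nbelow_full ?SVT_card // => x x_in.
  exact: SVT_row_lt lt_j'j x_in m_in.
rewrite (bigD1 j) ?ltnn //= big1 ?addn0 => [|j' /andP [ge_j' ne_j']].
  by rewrite leq_addr ltn_add2l -(SVT_card (i, j)) nbelow_lt.
apply: nbelow_eq0 => x x_in; apply: ltnW; apply: (SVT_row_lt _ m_in x_in).
by rewrite ltn_neqAle leqNgt ge_j' andbT eq_sym val_eqE.
Qed.

Lemma psi_dominated : dominated (psi T).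
Proof.
move=> k j; rewrite (rank_psi ord0) (rank_psi ord_max) ltnNge => /negP le_first.
rewrite leqNgt; apply/negP => lt_second; apply: le_first.
(* Some entry y < k of row 2 lies weakly right of column j; by column strictness the
   first j + 1 cells of row 1 then lie entirely below y. *)
have [j' le_jj' [y y_in lt_yk]] :
    exists2 j' : 'I_n, j <= j' & exists2 y, y \in T (ord_max, j') & y < k.
  have : 0 < \sum_(j' < n | ~~ (j' < j)) nbelow (T (ord_max, j')) k.
    move: lt_second; rewrite (bigID (fun j' : 'I_n => j' < j)) /= lt0n.
    apply: contraTneq => ->; rewrite addn0 -leqNgt.
    by apply: leq_sum => j' _; rewrite -SVT_card nbelow_le.
  rewrite lt0n sum_nat_eq0 => /forallPn [j']; rewrite negb_imply -leqNgt -lt0n.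
  by case/andP=> le_jj' /nbelow_gt0 y_lt; exists j'.
rewrite (bigID (fun j'' : 'I_n => j'' < j.+1)) /=; apply: leq_trans (leq_addr _ _).
apply: eq_leq; apply: eq_bigr => j'' lt_j''j; rewrite nbelow_full ?SVT_card // => x x_in.
apply: ltn_trans lt_yk; apply: SVT_col_lt x_in y_in.
by rewrite ltnS in lt_j''j; apply: leq_trans lt_j''j le_jj'.
Qed.

Lemma count_psi : count id (psi T) = suma a.
Proof.
rewrite -(take_size (psi T)) -rank_true (rank_psi ord0); apply: eq_bigr => j _.
by rewrite nbelow_full ?SVT_card // size_psi.
Qed.

Lemma tableau_of_psi : tableau_of_word (psi T) = T.
Proof.
apply/ffunP => -[i j]; apply/setP => m; rewrite mem_tableau_of_word.
apply/idP/idP => [/andP [/eqP letter_m rank_m] | m_in]; last first.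
  by rewrite (nth_psi_cell m_in) eqxx rank_psi_cell.
case: T_SVT => _ T_cover _ _ _; have [[i0 j0] m_in] := T_cover m.
move: letter_m; rewrite (nth_psi_cell m_in) => /row_letter_inj eq_i0; subst i0.
by rewrite -(ord_inj (block_unique (rowsum_mono i) (rank_psi_cell m_in) rank_m)).
Qed.

End SVT.

Section WordToTableau.
Variable P : seq bool.
Hypotheses (P_path : lattice_path (suma a) (sumb b) P) (P_dom : dominated P).
Local Notation T := (tableau_of_word P).

Lemma size_word : size P = N.
Proof. by case: P_path. Qed.

Lemma rank_word_total i : rank P (row_letter i) N = rowsum i n.
Proof.
rewrite -size_word; case: rowP.
  by rewrite rank_true take_size rowsum_first; case: P_path.
by rewrite rank_false take_size rowsum_second (lattice_path_count_negb P_path).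
Qed.

Lemma card_tableau_of_word c : #|T c| = dens c.
Proof.
case: c => i j; set e := row_letter i.
have le_hi : rowsum i j.+1 <= rank P e N by rewrite rank_word_total rowsum_mono.
have le_lo_hi := rowsum_mono i (leqnSn j).
pose below t (m : 'I_N) : nat := (nth false P m == e) && (rank P e m < t).
rewrite card_sum_mem (eq_bigr (fun m => below (rowsum i j.+1) m - below (rowsum i j) m)).
  rewrite sumnB => [|m _]; last first.
    by rewrite /below; case: (_ == e); case: ltnP => //= lt_lo; rewrite (leq_trans lt_lo le_lo_hi).
  rewrite !sum_rank_lt ?size_word // (minn_idPl le_hi) (minn_idPl (leq_trans le_lo_hi le_hi)).
  by rewrite rowsumS addKn.
move=> m _; rewrite mem_tableau_of_word -/e /below; case: (_ == e) => //=.
case: (ltnP (rank P e m) (rowsum i j)) => [lt_lo | _]; last by rewrite subn0.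
by rewrite (leq_trans lt_lo le_lo_hi) subnn.
Qed.

Lemma tableau_of_word_cover (m : 'I_N) : exists c, m \in T c.
Proof.
pose i : 'I_2 := if nth false P m then ord0 else ord_max.
have letter_i : row_letter i = nth false P m by rewrite /i; case: (nth false P m).
have lt_rank : rank P (row_letter i) m < rowsum i n.
  rewrite -rank_word_total; apply: leq_trans (rank_mono _ _ (ltn_ord m)).
  by rewrite rankS ?size_word // letter_i eqxx addn1.
have [j lt_jn rank_j] := block_exists (rowsum0 i) lt_rank.
by exists (i, Ordinal lt_jn); rewrite mem_tableau_of_word rank_j letter_i eqxx.
Qed.

Lemma tableau_of_word_disjoint c c' : c <> c' -> [disjoint T c & T c'].
Proof.
case: c c' => i j [i' j'] ne_cc'; apply/pred0P => m /=; apply/negbTE/andP.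
rewrite !mem_tableau_of_word => -[/andP [/eqP letter_m rank_m] /andP [/eqP letter_m' rank_m']].
have eq_ii' : i = i' by apply: row_letter_inj; rewrite -letter_m -letter_m'.
subst i'; apply: ne_cc'; congr (_, _); apply: ord_inj.
exact: block_unique (rowsum_mono i) rank_m rank_m'.
Qed.

Lemma tableau_of_word_row i (j j' : 'I_n) : val j' = (val j).+1 ->
  forall x y, x \in T (i, j) -> y \in T (i, j') -> x < y.
Proof.
move=> succ_j x y; rewrite !mem_tableau_of_word succ_j.
move=> /andP [_ /andP [_ lt_x]] /andP [_ /andP [le_y _]].
rewrite ltnNge; apply/negP => le_yx.
by move: (leq_trans le_y (rank_mono _ _ le_yx)); rewrite leqNgt lt_x.
Qed.

Lemma tableau_of_word_col (j : 'I_n) x y :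
  x \in T (ord0, j) -> y \in T (ord_max, j) -> x < y.
Proof.
rewrite !mem_tableau_of_word => /andP [_ /andP [_ lt_x]] /andP [/eqP P_y /andP [le_y _]].
rewrite ltnNge; apply/negP => le_yx.
(* Dominance at the prefix of length y + 1, which ends with the letter of y. *)
have := @P_dom y.+1 j; rewrite !rankS ?size_word // P_y /= addn0 addn1.
move=> /(_ (leq_ltn_trans (rank_mono _ _ le_yx) lt_x)).
by rewrite ltnNge le_y.
Qed.

Lemma tableau_of_word_SVT : is_SVT T.
Proof.
split; [exact: card_tableau_of_word | exact: tableau_of_word_cover |
  exact: tableau_of_word_disjoint | exact: tableau_of_word_row | exact: tableau_of_word_col].
Qed.

Lemma psi_tableau_of_word : psi T = P.
Proof.
apply: (@eq_from_nth _ false); rewrite size_psi ?size_word // => m lt_m.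
rewrite (nth_psi _ (Ordinal lt_m)); apply/existsP/idP => [[j] | P_m].
  by rewrite mem_tableau_of_word => /andP [/eqP ->].
have [[i j] m_in] := tableau_of_word_cover (Ordinal lt_m).
move: (m_in); rewrite mem_tableau_of_word P_m => /andP [/eqP letter_i _].
have eq_i : i = ord0 by apply: row_letter_inj; rewrite -letter_i.
by exists j; rewrite -eq_i.
Qed.

End WordToTableau.

Local Notation steps := [seq (a j, b j) | j <- enum 'I_n].

Lemma Pmax_staircase : Pmax a b = staircase steps.
Proof. by rewrite /Pmax /staircase -map_comp. Qed.

Lemma sumn_take_steps_fst t : sumn (take t (map fst steps)) = rowsum ord0 t.
Proof. by rewrite -map_comp sumn_take_enum. Qed.

Lemma sumn_take_steps_snd t : sumn (take t (map snd steps)) = rowsum ord_max t.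
Proof. by rewrite -map_comp sumn_take_enum. Qed.

Lemma sumn_steps_fst : sumn (map fst steps) = suma a.
Proof. by rewrite -map_comp sumn_enum. Qed.

Lemma sumn_steps_snd : sumn (map snd steps) = sumb b.
Proof. by rewrite -map_comp sumn_enum. Qed.

Lemma dominated_of_le P : lpath_le P (Pmax a b) -> dominated P.
Proof.
move=> le_max k j; rewrite rank_true rank_false => lt_x.
have [k' le_k' take_k'] : exists2 k', k' <= size P & take k' P = take k P.
  case: (leqP k (size P)) => [le_k | /ltnW lt_k]; first by exists k.
  by exists (size P); rewrite // take_size take_oversize.
have [|y [k1 _ pt_k1] le_y] := le_max (count id (take k P)) (count negb (take k P)).
  by exists k'; rewrite // /path_pt take_k'.
apply: (leq_trans le_y); rewrite -sumn_take_steps_snd.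
have := @staircase_below steps k1 j; rewrite -Pmax_staircase pt_k1; apply.
by rewrite sumn_take_steps_fst.
Qed.

Lemma le_of_dominated P :
  lattice_path (suma a) (sumb b) P -> dominated P -> lpath_le P (Pmax a b).
Proof.
move=> P_path P_dom x y [k le_k [<- <-]].
case: (ltnP (count id (take k P)) (suma a)) => [lt_x | le_x].
  rewrite -rowsum_first in lt_x.
  have [t lt_tn /andP [le_t lt_t]] := block_exists (rowsum0 ord0) lt_x.
  exists (rowsum ord_max t).
    rewrite Pmax_staircase -sumn_take_steps_snd; apply: staircase_point.
    by rewrite !sumn_take_steps_fst le_t ltnW.
  by have := @P_dom k (Ordinal lt_tn); rewrite rank_true rank_false; apply; exact: lt_t.
exists (sumb b).
  have := staircase_end steps; rewrite -Pmax_staircase sumn_steps_fst sumn_steps_snd.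
  suff -> : count id (take k P) = suma a by [].
  by apply/eqP; rewrite eqn_leq le_x andbT; case: P_path => _ <-; apply: count_take_leq.
by rewrite -(lattice_path_count_negb P_path) count_take_leq.
Qed.

End Tableaux.

Theorem theorem9 (n : nat) (a b : 'I_n -> nat) :
  0 < n -> (forall j, 0 < a j) -> (forall j, 0 < b j) ->
  (forall T1 T2 : tableau a b, is_SVT T1 -> is_SVT T2 -> psi T1 = psi T2 -> T1 = T2)
  /\ (forall P : seq bool,
        (exists T : tableau a b, is_SVT T /\ psi T = P) <->
        (lattice_path (suma a) (sumb b) P /\ lpath_le P (Pmax a b))).
Proof.
move=> _ a_gt0 b_gt0; split=> [T1 T2 T1_SVT T2_SVT eq_psi | P].
  by rewrite -(tableau_of_psi a_gt0 b_gt0 T1_SVT) -(tableau_of_psi a_gt0 b_gt0 T2_SVT) eq_psi.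
split=> [[T [T_SVT <-]] | [P_path le_P]].
  have psi_path : lattice_path (suma a) (sumb b) (psi T).
    by split; [exact: size_psi | exact: count_psi T_SVT].
  by split; last exact: le_of_dominated psi_path (psi_dominated a_gt0 b_gt0 T_SVT).
exists (tableau_of_word a b P); split.
  exact: tableau_of_word_SVT P_path (dominated_of_le le_P).
exact: psi_tableau_of_word.
Qed.
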